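(* Let $G$ be a graph with vertex set $\{v_1,\dots,v_n\}$ and let $k\ge 2$ be an integer. Construct a graph $G'$ as follows. Its vertices are the ''$v$-type'' vertices $v_{i,j}$ for $1\le i\le n$, $1\le j\le k$, and the ''$u$-type'' vertices $u_{i,j}$ for $1\le i,j\le k$, $i\ne j$. For any vertex $x_{i,j}$ (of either type), $i$ is its row number and $j$ its column number. The edges of $G'$ are: (1) column edges: every two distinct vertices (of any types) with the same column number are adjacent; (2) row edges: every two distinct $v$-type vertices with the same row number are adjacent; (3) diagonal edges: $u_{i,j}$ and $u_{i',j'}$ are adjacent whenever $i\neq i'$ and $j\ne j'$; (4) cross edges: $u_{a,b}$ and $v_{c,d}$ are adjacent if and only if $a=d$; (5) $G$-edges: $v_{i,j}$ and $v_{i',j'}$ are adjacent whenever $v_iv_{i'}\in E(G)$; and there are no other edges. Then: (a) $i(G')=k-1$; (b) $\mu_\alpha(G')\le 1$; (c) $\alpha(G)\ge k$ if and only if $\alpha(G')\ge k$; (d) $\alpha(G)\ge k$ if and only if $G'$ is not well-covered.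
   Context: All graphs are finite, simple and undirected. For a graph $G$, $\alpha(G)$ is the maximum size of an independent set and $i(G)$ is the minimum size of a maximal (with respect to inclusion) independent set; the independence gap is $\mu_\alpha(G)=\alpha(G)-i(G)$. A graph is well-covered if all its maximal independent sets have the same size. *)

From mathcomp Require Import all_boot.
Set Implicit Arguments. Unset Strict Implicit. Unset Printing Implicit Defensive.

(* A simple graph is a finite type with an irreflexive symmetric relation e. *)
Section Graphs.
Variable T : finType.
Variable e : rel T.

Definition independent (S : {set T}) : bool :=
  [forall x in S, forall y in S, ~~ e x y].

Definition maximal_independent (S : {set T}) : bool :=
  independent S && [forall x, (x \notin S) ==> ~~ independent (x |: S)].

Definition alpha : nat := \max_(S : {set T} | independent S) #|S|.

(* i(G): minimum size of a maximal independent set (#|T| is a harmless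
   default, since every set has size <= #|T| and maximal sets exist). *)
Definition indep_min : nat :=
  \big[minn/#|T|]_(S : {set T} | maximal_independent S) #|S|.

Definition indep_gap : nat := alpha - indep_min.

Definition well_covered : Prop :=
  forall S1 S2 : {set T}, maximal_independent S1 -> maximal_independent S2 ->
    #|S1| = #|S2|.
End Graphs.

(* Vertex set of G': v-type vertices v_{i,j} = inl (i,j), i in 'I_n, j in 'I_k;
   u-type vertices u_{i,j} = inr (i,j), i,j in 'I_k, i != j.
   First component = row number, second = column number. *)
Definition GV (n k : nat) : finType :=
  (('I_n * 'I_k) + {p : 'I_k * 'I_k | p.1 != p.2})%type.

Arguments GV : clear implicits.
Definition Gprime_adj (n k : nat) (e : rel 'I_n) (x y : GV n k) : bool :=
  match x, y with
  | inl (i, j), inl (i', j') =>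
      (x != y) && [|| j == j' (* column edge *), i == i' (* row edge *)
                    | e i i' (* G-edge *)]
  | inl (c, d), inr u | inr u, inl (c, d) =>
      ((val u).2 == d) (* column edge *) || ((val u).1 == d) (* cross edge *)
  | inr u, inr u' =>
      (x != y) && (((val u).2 == (val u').2) (* column edge *)
                   || (((val u).1 != (val u').1) && ((val u).2 != (val u').2)))
                   (* diagonal edge *)
  end.
Arguments Gprime_adj {n} k e x y.

(* An independent set of G' meets each column at most once, so alpha(G') <= k;
   its u-vertices all lie in one row a, and no vertex of it lies in column a
   (cross and diagonal edges), so if it has a u-vertex it has at most k-1
   elements.  A maximal independent set leaving two columns free could be
   enlarged by a u-vertex placed in such a column, in the row of its
   u-vertices, so every maximal independent set has at least k-1 elements; the
   u-vertices of row 0 form one of size k-1.  Hence i(G') = k-1,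
   mu_alpha(G') <= 1, and G' is not well-covered iff it has an independent
   k-set.  Such a set has only v-vertices, in pairwise distinct rows forming an
   independent set of G; conversely an independent set {r_1,...,r_k} of G
   gives the independent set {v_{r_j,j}} of G'. *)

From HB Require Import structures.
From mathcomp Require Import all_boot zify.
Set Implicit Arguments. Unset Strict Implicit. Unset Printing Implicit Defensive.

(* [minn] has no neutral element on nat, but being associative and commutative
   already lets [big_rem_AC] pull one term out of the minimum [indep_min]. *)
HB.instance Definition _ := SemiGroup.isComLaw.Build nat minn minnA minnC.

Section Independence.
Variables (T : finType) (e : rel T).

Lemma independentP (S : {set T}) :
  reflect {in S &, forall x y, ~~ e x y} (independent e S).
Proof.
apply: (iffP forall_inP) => [iS x y xS yS | iS x xS].
  by have /forall_inP := iS x xS; apply.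
by apply/forall_inP => y; apply: iS.
Qed.

Lemma alpha_witness : exists2 S : {set T}, independent e S & #|S| = alpha e.
Proof.
have indep0 : 0 < #|[pred S : {set T} | independent e S]|.
  by apply/card_gt0P; exists set0; apply/independentP => x y; rewrite inE.
by have [S] := eq_bigmax_cond (fun S : {set T} => #|S|) indep0; exists S.
Qed.

Lemma leq_card_alpha (S : {set T}) : independent e S -> #|S| <= alpha e.
Proof. exact: leq_bigmax_cond. Qed.

Lemma maximum_independent_maximal (S : {set T}) :
  independent e S -> alpha e <= #|S| -> maximal_independent e S.
Proof.
move=> iS maxS; apply/andP; split=> //; apply/forall_inP => x xS.
by apply: contraL maxS => /leq_card_alpha; rewrite cardsU1 xS add1n -ltnNge.
Qed.

Lemma indep_min_le (S : {set T}) :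
  maximal_independent e S -> indep_min e <= #|S|.
Proof.
by move=> mS; rewrite /indep_min (big_rem_AC _ _ _ _ (mem_index_enum S)) mS geq_minl.
Qed.

Lemma indep_minE (S0 : {set T}) : maximal_independent e S0 ->
  (forall S, maximal_independent e S -> #|S0| <= #|S|) -> indep_min e = #|S0|.
Proof.
move=> mS0 minS0; apply/eqP; rewrite eqn_leq indep_min_le //=.
apply: (big_ind (leq #|S0|)) => [|x y|//]; first exact: max_card.
by rewrite leq_min => -> ->.
Qed.

Hypotheses (e_irr : irreflexive e) (e_sym : symmetric e).

Lemma independentU1 x (S : {set T}) :
  independent e (x |: S) = [forall y in S, ~~ e x y] && independent e S.
Proof.
apply/independentP/andP => [iS | [/forall_inP xS /independentP iS]].
  split; last by apply/independentP => y z yS zS; apply: iS; rewrite setU1r.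
  by apply/forall_inP => y yS; apply: iS; rewrite ?setU11 ?setU1r.
move=> y z; rewrite !in_setU1 => /predU1P[->|yS] /predU1P[->|zS].
- by rewrite e_irr.
- exact: xS.
- by rewrite e_sym; apply: xS.
- exact: iS.
Qed.

Lemma maximal_independentP (S : {set T}) :
  reflect (independent e S /\ forall x, x \notin S -> exists2 y, y \in S & e x y)
          (maximal_independent e S).
Proof.
apply: (iffP andP) => -[iS maxS]; split=> //.
  move=> x xS; move/forall_inP: maxS => /(_ x xS).
  rewrite independentU1 iS andbT => /forall_inPn[y yS /negbNE exy].
  by exists y.
apply/forall_inP => x /maxS[y yS exy]; rewrite independentU1 negb_and.
by apply/orP; left; apply/forall_inPn; exists y; rewrite ?exy.
Qed.
End Independence.

Section Construction.
Variables (n k : nat) (e : rel 'I_n).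
Local Notation V := (GV n k).
Local Notation adj := (Gprime_adj k e).

Definition column (x : V) : 'I_k :=
  match x with inl p => p.2 | inr u => (val u).2 end.

Definition u_vertex (a c : 'I_k) (ac : a != c) : V :=
  inr (exist (fun p : 'I_k * 'I_k => p.1 != p.2) (a, c) ac).

Lemma Gprime_adj_irr : irreflexive adj.
Proof. by case=> [[i j]|u] /=; rewrite eqxx. Qed.

Lemma Gprime_adj_column x y : x != y -> column x = column y -> adj x y.
Proof.
by case: x y => [[i j]|u] [[i' j']|u'] //= nxy cxy; rewrite ?nxy cxy eqxx.
Qed.

Lemma Gprime_adj_u_diff_row u u' : (val u).1 != (val u').1 -> adj (inr u) (inr u').
Proof.
move=> r; have nuu : (inr u : V) != inr u' by apply: contra r => /eqP[->].
by rewrite /= nuu r orbN.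
Qed.

Lemma Gprime_nadj_u_same_row u u' : (val u).1 = (val u').1 -> ~~ adj (inr u) (inr u').
Proof.
move=> r; rewrite /= r eqxx /= orbF; apply/nandP.
have [c|] := eqVneq (val u).2 (val u').2; [left | by right].
rewrite negbK; apply/eqP; congr inr; apply: val_inj.
by case: u u' r c => [[a b] ?] [[a' b'] ?] /= -> ->.
Qed.

Lemma column_inj S : independent adj S -> {in S &, injective column}.
Proof.
move=> /independentP iS x y xS yS cxy; apply: contraTeq (iS x y xS yS) => nxy.
by rewrite negbK Gprime_adj_column.
Qed.

Lemma card_Gprime_independent S : independent adj S -> #|S| <= k.
Proof.
move=> iS; rewrite -(card_in_imset (column_inj iS)).
by apply: leq_trans (max_card _) _; rewrite card_ord.
Qed.

Lemma alpha_Gprime_le : alpha adj <= k.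
Proof. by apply/bigmax_leqP => S; apply: card_Gprime_independent. Qed.

Lemma independent_u_same_row S u u' : independent adj S -> inr u \in S -> inr u' \in S ->
  (val u).1 = (val u').1.
Proof.
move=> /independentP iS uS u'S; apply/eqP; apply: contraTT (iS _ _ uS u'S) => r.
by rewrite negbK Gprime_adj_u_diff_row.
Qed.

Lemma u_row_notin_columns S u : independent adj S -> inr u \in S ->
  (val u).1 \notin column @: S.
Proof.
move=> iS uS; apply/imsetP => -[[[i j]|u'] xS /= ej].
  by have /independentP/(_ _ _ uS xS) := iS; rewrite /= ej eqxx orbT.
by have := valP u'; rewrite -(independent_u_same_row iS uS xS) ej eqxx.
Qed.

Lemma card_independent_u S u : independent adj S -> inr u \in S -> #|S| <= k.-1.
Proof.
move=> iS uS; rewrite -(card_in_imset (column_inj iS)).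
apply: leq_trans (_ : #|[set~ (val u).1]| <= _); last by rewrite cardsC1 card_ord.
apply/subset_leq_card/subsetP => c cS; rewrite !inE.
by apply: contraNneq (u_row_notin_columns iS uS) => <-.
Qed.

Lemma u_vertex_isolated S a c (ac : a != c) :
  independent adj S -> a \notin column @: S -> c \notin column @: S ->
  (forall u, inr u \in S -> (val u).1 = a) -> {in S, forall y, ~~ adj (u_vertex ac) y}.
Proof.
move=> iS aS cS rowS y yS; have cy := imset_f column yS.
case: y yS cy => [[i j]|u] yS cy; last by apply: Gprime_nadj_u_same_row; rewrite /= rowS.
by rewrite /= negb_or; apply/andP; split; [apply: contraNneq cS | apply: contraNneq aS] => ->.
Qed.

Lemma Gprime_independent_of_alpha :
  k <= alpha e -> exists2 S : {set V}, independent adj S & #|S| = k.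
Proof.
have [R iR <-] := alpha_witness e => kR.
pose r (j : 'I_k) : 'I_n := enum_val (widen_ord kR j).
have r_inj : injective r.
  by move=> j j' /enum_val_inj/(congr1 val) /= /val_inj.
exists [set inl (r j, j) | j : 'I_k]; last by rewrite card_imset ?card_ord // => j j' [_].
apply/independentP => _ _ /imsetP[j _ ->] /imsetP[j' _ ->] /=.
have [<-|njj] := eqVneq j j'; first by rewrite eqxx.
have /independentP/(_ _ _ (enum_valP _) (enum_valP _))/negbTE -> := iR.
by rewrite (inj_eq r_inj) (negbTE njj) andbF.
Qed.

Hypothesis e_sym : symmetric e.

Lemma Gprime_adj_sym : symmetric adj.
Proof.
case=> [[i j]|u] [[i' j']|u'] //=.
- by rewrite eq_sym (eq_sym j) (eq_sym i) e_sym.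
- by rewrite eq_sym (eq_sym (val u).2) (eq_sym (val u).1).
Qed.

Lemma maximal_card_Gprime S : maximal_independent adj S -> k.-1 <= #|S|.
Proof.
case/(maximal_independentP Gprime_adj_irr Gprime_adj_sym) => iS maxS.
rewrite leqNgt; apply/negP => small.
have : 1 < #|~: (column @: S)|.
  by have := cardsC (column @: S); rewrite card_ord (card_in_imset (column_inj iS)); lia.
case/card_gt1P => c1 [c2 [c1S c2S c12]]; rewrite !inE in c1S c2S.
have [a aS rowS] : exists2 a, a \notin column @: S &
    forall u, inr u \in S -> (val u).1 = a.
  case: (pickP [pred u | inr u \in S]) => [u uS | noU].
    exists (val u).1; first exact: u_row_notin_columns iS uS.
    by move=> u' u'S; apply: independent_u_same_row iS u'S uS.
  by exists c1 => // u uS; have := noU u; rewrite /= uS.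
have [c cS ac] : exists2 c, c \notin column @: S & a != c.
  by have [ac1|ac1] := eqVneq a c1; [exists c2; rewrite ?ac1 | exists c1].
have /maxS[y yS] : u_vertex ac \notin S by apply: contra cS => /(imset_f column).
by rewrite (negbTE (u_vertex_isolated ac iS aS cS rowS yS)).
Qed.

Hypothesis k_ge2 : 1 < k.

Let zero : 'I_k := Ordinal (ltnW k_ge2).
Let one : 'I_k := Ordinal k_ge2.

Definition u_row0 : {set V} :=
  [set x : V | if x is inr u then (val u).1 == 0 :> nat else false].

Lemma u_row0_maximal : maximal_independent adj u_row0.
Proof.
apply/(maximal_independentP Gprime_adj_irr Gprime_adj_sym); split.
  apply/independentP => -[[i j]|u] [[i' j']|u']; rewrite !inE // => r0 r0'.
  by apply: Gprime_nadj_u_same_row; apply: val_inj; rewrite /= (eqP r0) (eqP r0').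
move=> x xS; have [cx|cx] := eqVneq zero (column x).
  have zero_one : zero != one by [].
  exists (u_vertex zero_one); first by rewrite inE.
  case: x xS cx => [[c d]|u] xS /= cx; first by rewrite -cx eqxx orbT.
  by apply: Gprime_adj_u_diff_row; rewrite inE in xS.
exists (u_vertex cx); first by rewrite inE.
by apply: Gprime_adj_column => //; apply: contraNneq xS => ->; rewrite inE.
Qed.

Lemma card_u_row0 : #|u_row0| = k.-1.
Proof.
apply/eqP; rewrite eqn_leq maximal_card_Gprime ?u_row0_maximal // andbT.
have zero_one : zero != one by [].
case/andP: u_row0_maximal => iS _.
by apply: (card_independent_u iS (_ : u_vertex zero_one \in _)); rewrite inE.
Qed.

Lemma indep_min_Gprime : indep_min adj = k.-1.
Proof.
rewrite -card_u_row0; apply: indep_minE u_row0_maximal _ => S mS.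
by rewrite card_u_row0 maximal_card_Gprime.
Qed.

Lemma indep_gap_Gprime : indep_gap adj <= 1.
Proof. by rewrite /indep_gap indep_min_Gprime; have := alpha_Gprime_le; lia. Qed.

Lemma Gprime_not_well_covered : k <= alpha e -> ~ well_covered adj.
Proof.
case/Gprime_independent_of_alpha => S iS cardS WC.
have mS : maximal_independent adj S.
  by apply: maximum_independent_maximal; rewrite // cardS alpha_Gprime_le.
by have := WC _ _ mS u_row0_maximal; rewrite cardS card_u_row0; lia.
Qed.

Hypothesis e_irr : irreflexive e.

Lemma alpha_of_Gprime_independent S :
  independent adj S -> k <= #|S| -> k <= alpha e.
Proof.
move=> iS kS; have /independentP indepS := iS.
have noU u : inr u \notin S.
  by apply/negP => /(card_independent_u iS); lia.
pose row (x : V) : option 'I_n := if x is inl p then Some p.1 else None.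
pose R := [set i | [exists j, inl (i, j) \in S]].
have iR : independent e R.
  apply/independentP => i i'; rewrite !inE => /existsP[j xS] /existsP[j' yS].
  apply: contra (indepS _ _ xS yS) => eii'; rewrite /= eii' !orbT andbT.
  by apply: contraTneq eii' => -[-> _]; rewrite e_irr.
have row_inj : {in S &, injective row}.
  move=> [[i j]|u] [[i' j']|u'] xS yS;
    try by [rewrite (negbTE (noU _)) in xS | rewrite (negbTE (noU _)) in yS].
  move=> /= [eii']; apply: contraTeq (indepS _ _ xS yS) => nxy.
  by rewrite negbK /= nxy eii' eqxx orbT.
apply: leq_trans kS (leq_trans _ (leq_card_alpha iR)).
rewrite -(card_in_imset row_inj) -(card_imset R (@Some_inj _)).
apply/subset_leq_card/subsetP => _ /imsetP[[[i j]|u] xS ->].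
  by apply: imset_f; rewrite inE; apply/existsP; exists j.
by rewrite (negbTE (noU u)) in xS.
Qed.

Lemma alpha_Gprime_geq_iff : (k <= alpha e) <-> (k <= alpha adj).
Proof.
split=> [/Gprime_independent_of_alpha[S iS cardS] | ].
  by rewrite -{1}cardS leq_card_alpha.
by have [S iS <-] := alpha_witness adj; apply: alpha_of_Gprime_independent.
Qed.

Lemma well_covered_Gprime : alpha e < k -> well_covered adj.
Proof.
move=> small; suff cardE S : maximal_independent adj S -> #|S| = k.-1.
  by move=> S1 S2 /cardE-> /cardE->.
move=> mS; have /andP[iS _] := mS; have := maximal_card_Gprime mS.
have := card_Gprime_independent iS; have : ~~ (k <= #|S|).
  by apply: contraL small => /(alpha_of_Gprime_independent iS); rewrite -leqNgt.
lia.
Qed.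

End Construction.

Theorem mainTheorem9 (n k : nat) (e : rel 'I_n) :
  irreflexive e -> symmetric e -> 2 <= k ->
  [/\ indep_min (Gprime_adj k e) = k.-1,
      indep_gap (Gprime_adj k e) <= 1,
      (k <= alpha e) <-> (k <= alpha (Gprime_adj k e))
    & (k <= alpha e) <-> ~ well_covered (Gprime_adj k e)].
Proof.
move=> e_irr e_sym k_ge2; split.
- exact: indep_min_Gprime e_sym k_ge2.
- exact: indep_gap_Gprime e_sym k_ge2.
- exact: alpha_Gprime_geq_iff k_ge2 e_irr.
split; first exact: Gprime_not_well_covered e_sym k_ge2.
by case: (leqP k (alpha e)) => // /(well_covered_Gprime e_sym k_ge2 e_irr).
Qed.
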